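(* Let $f\colon \mathbb{R}\to\mathbb{R}$ be a $\mathcal{C}^1$-smooth strictly convex function and let $x\in\mathbb{R}$ be a point with $f'(x)\neq 0$. Let $g=f'(x)$ and choose any initial scalar $h>0$. Consider the procedure: while $f(x-hg)\ge f(x)$, replace $h$ by its unit-step BFGS update $h_+$ at $x$ (defined below). Then this procedure terminates after finitely many iterations, i.e. eventually $f(x-hg)<f(x)$.
   Context: For a $\mathcal{C}^1$-smooth convex $f\colon\mathbb{R}^n\to\mathbb{R}$, a point $x$ with gradient $g=\nabla f(x)$, and a symmetric positive definite $n\times n$ matrix $H$, the unit-step BFGS update $H_+$ is defined by $s=-Hg$, $x_+=x+s$, $g_+=\nabla f(x_+)$, $y=g_+-g$, $V=I-\frac{sy^T}{s^Ty}$, $H_+=VHV^T+\frac{ss^T}{s^Ty}$ (defined when $s^Ty\neq 0$; strict convexity and $g\ne 0$ guarantee $s^Ty>0$). Here $n=1$, so $H=h$ is a positive scalar and the point $x$ stays fixed throughout the procedure. *)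

From Stdlib Require Import Reals.
Open Scope R_scope.

Definition C1_with_derivative (f df : R -> R) : Prop :=
  (forall t, derivable_pt_lim f t (df t)) /\ continuity df.

Definition strictly_convex (f : R -> R) : Prop :=
  forall a b t, a <> b -> 0 < t < 1 ->
    f (t * a + (1 - t) * b) < t * f a + (1 - t) * f b.

(* Unit-step BFGS update for n = 1 (H = h scalar), at the fixed point x,
   with gradient map df:  s = -h g, y = g_+ - g, V = 1 - s y/(s y),
   h_+ = V h V + s s/(s y). *)
Definition bfgs_update (df : R -> R) (x h : R) : R :=
  let g := df x in
  let s := - (h * g) in
  let xp := x + s in
  let gp := df xp in
  let y := gp - g in
  let V := 1 - s * y / (s * y) in
  V * h * V + s * s / (s * y).

Definition loop_step (f df : R -> R) (x h : R) : R :=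
  if Rle_dec (f x) (f (x - h * df x)) then bfgs_update df x h else h.

Fixpoint loop_iter (f df : R -> R) (x h0 : R) (k : nat) : R :=
  match k with
  | O => h0
  | S k' => loop_step f df x (loop_iter f df x h0 k')
  end.

(** In dimension one the unit-step BFGS update has the closed form
    [h_+ = h g^2 / (g^2 - g g_+)] with [g_+ = f'(x - h g)].  If the step
    [x - h g] fails to decrease [f], the tangent line of [f] at [x - h g]
    lies below the value of [f] at a fixed successful point [x - a g], which
    forces [g g_+] to be bounded away from [0] from below.  Hence every update
    of a failed step contracts [h] by a fixed factor [r < 1], and after
    finitely many updates [h] is small enough for [x - h g] to be a descent
    step. *)

From Stdlib Require Import Reals Lra Psatz Classical.
Open Scope R_scope.

Definition convex (f : R -> R) : Prop :=
  forall a b t, 0 < t < 1 -> f (t * a + (1 - t) * b) <= t * f a + (1 - t) * f b.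

Lemma strictly_convex_convex (f : R -> R) : strictly_convex f -> convex f.
Proof.
  intros Hf a b t Ht.
  destruct (Req_dec a b) as [<- | Hab].
  - replace (t * a + (1 - t) * a) with a by ring. lra.
  - apply Rlt_le, Hf; assumption.
Qed.

Lemma derivable_pt_lim_first_order (f : R -> R) (z l : R) :
  derivable_pt_lim f z l ->
  forall eps, 0 < eps -> exists del, 0 < del /\
    forall u, u <> 0 -> Rabs u < del ->
      Rabs (f (z + u) - f z - l * u) <= eps * Rabs u.
Proof.
  intros Hl eps Heps.
  destruct (Hl eps Heps) as [del Hdel].
  exists del. split; [apply cond_pos |].
  intros u Hu Hlt.
  replace (f (z + u) - f z - l * u) with (((f (z + u) - f z) / u - l) * u)
    by (field; exact Hu).
  rewrite Rabs_mult.
  apply Rmult_le_compat_r; [apply Rabs_pos |].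
  apply Rlt_le, Hdel; assumption.
Qed.

Lemma convex_tangent_le (f df : R -> R) :
  (forall t, derivable_pt_lim f t (df t)) -> convex f ->
  forall z w, f z + df z * (w - z) <= f w.
Proof.
  intros Hd Hc z w.
  destruct (Req_dec w z) as [-> | Hwz]; [lra |].
  (* If the tangent overshoots [f w] by [eta], then at [z + t (w - z)] with [t]
     small the chord lies below the first-order expansion by [t eta / 2]. *)
  apply Rnot_lt_le; intro Hlt.
  set (D := w - z) in *.
  set (eta := f z + df z * D - f w).
  assert (HD : 0 < Rabs D) by (apply Rabs_pos_lt; unfold D; lra).
  assert (Heta : 0 < eta) by (unfold eta; lra).
  destruct (derivable_pt_lim_first_order f z (df z) (Hd z) (eta / (2 * Rabs D)))
    as [del [Hdel Happrox]].
  { apply Rdiv_lt_0_compat; lra. }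
  set (t := Rmin (1 / 2) (del / (2 * Rabs D))).
  assert (Ht : 0 < t <= 1 / 2).
  { split; [apply Rmin_pos; [lra | apply Rdiv_lt_0_compat; lra] | apply Rmin_l]. }
  assert (HtD : Rabs (t * D) = t * Rabs D)
    by (rewrite Rabs_mult, (Rabs_pos_eq t); lra).
  assert (Hsmall : Rabs (t * D) < del).
  { rewrite HtD.
    apply Rle_lt_trans with (del / (2 * Rabs D) * Rabs D).
    - apply Rmult_le_compat_r; [lra | apply Rmin_r].
    - field_simplify; lra. }
  assert (HtD0 : t * D <> 0).
  { apply Rmult_integral_contrapositive; split; [lra | unfold D; intro; apply Hwz; lra]. }
  assert (Hdiff := Happrox (t * D) HtD0 Hsmall).
  replace (eta / (2 * Rabs D) * Rabs (t * D)) with (t * eta / 2) in Hdiff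
    by (rewrite HtD; field; lra).
  pose proof (Rle_abs (- (f (z + t * D) - f z - df z * (t * D)))) as Hlow.
  rewrite Rabs_Ropp in Hlow.
  assert (Hchord : f (z + t * D) <= f z + t * (f w - f z)).
  { replace (z + t * D) with (t * w + (1 - t) * z) by (unfold D; ring).
    specialize (Hc w z t ltac:(lra)). lra. }
  unfold eta in *. nra.
Qed.

Lemma small_steps_descend (f df : R -> R) (x : R) :
  derivable_pt_lim f x (df x) -> df x <> 0 ->
  exists del, 0 < del /\ forall h, 0 < h < del -> f (x - h * df x) < f x.
Proof.
  intros Hd Hg.
  set (g := df x) in *.
  assert (Hag : 0 < Rabs g) by (apply Rabs_pos_lt; exact Hg).
  destruct (derivable_pt_lim_first_order f x g Hd (Rabs g / 2)) as [del [Hdel Happrox]];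
    [lra |].
  exists (del / Rabs g). split; [apply Rdiv_lt_0_compat; lra |].
  intros h [Hh0 Hh1].
  assert (Hhg : Rabs (- (h * g)) = h * Rabs g)
    by (rewrite Rabs_Ropp, Rabs_mult, (Rabs_pos_eq h); lra).
  assert (Hu : - (h * g) <> 0) by (intro E; rewrite E, Rabs_R0 in Hhg; nra).
  assert (Hsmall : Rabs (- (h * g)) < del).
  { rewrite Hhg. apply (Rmult_lt_compat_r (Rabs g)) in Hh1; [| lra].
    field_simplify in Hh1; lra. }
  specialize (Happrox _ Hu Hsmall).
  rewrite Hhg in Happrox.
  pose proof (Rle_abs (f (x + - (h * g)) - f x - g * - (h * g))) as Hup.
  assert (Hg2 : Rabs g * Rabs g = g * g)
    by (rewrite <- Rabs_mult; apply Rabs_pos_eq; nra).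
  assert (0 < g * g) by (apply Rsqr_pos_lt; exact Hg).
  unfold Rminus. nra.
Qed.

Lemma bfgs_update_scalar (df : R -> R) (x h : R) :
  h <> 0 -> df x * (df x - df (x - h * df x)) <> 0 ->
  bfgs_update df x h
  = h * (df x * df x) / (df x * (df x - df (x - h * df x))).
Proof.
  intros Hh Hsy.
  unfold bfgs_update.
  change (x + - (h * df x)) with (x - h * df x).
  (* [s y = h (g (g - g_+))] is nonzero, so [V = 0] and only [s s / (s y)] remains *)
  destruct (Rmult_neq_0_reg _ _ Hsy) as [Hg Hy].
  field. repeat split; try assumption.
  intro E; apply Hy; lra.
Qed.

Lemma failed_step_slope (f df : R -> R) (x a k : R) :
  (forall t, derivable_pt_lim f t (df t)) -> convex f ->
  f x <= f (x - k * df x) ->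
  df x * df (x - k * df x) * (k - a) <= f (x - a * df x) - f x.
Proof.
  intros Hd Hc Hfail.
  pose proof (convex_tangent_le f df Hd Hc (x - k * df x) (x - a * df x)) as Htan.
  replace (x - a * df x - (x - k * df x)) with ((k - a) * df x) in Htan by ring.
  lra.
Qed.

Lemma bfgs_update_failed_step_le (f df : R -> R) (x a k c : R) :
  (forall t, derivable_pt_lim f t (df t)) -> convex f -> df x <> 0 ->
  0 < a < k -> k <= c ->
  f (x - a * df x) < f x -> f x <= f (x - k * df x) ->
  0 < bfgs_update df x k
    <= df x * df x / (df x * df x + (f x - f (x - a * df x)) / c) * k.
Proof.
  intros Hd Hc Hg Hak Hkc Hsucc Hfail.
  pose proof (failed_step_slope f df x a k Hd Hc Hfail) as Hslope.
  set (g := df x) in *.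
  set (gp := df (x - k * g)) in *.
  set (gap := f x - f (x - a * g)) in *.
  assert (Hg2 : 0 < g * g) by (apply Rsqr_pos_lt; exact Hg).
  assert (Hgap : 0 < gap) by (unfold gap; lra).
  assert (Hneg : g * gp < 0).
  { apply Rnot_le_lt; intro. assert (0 <= g * gp * (k - a)) by (apply Rmult_le_pos; lra).
    unfold gap in *; lra. }
  assert (Hgapc : g * gp * c <= - gap).
  { apply Rle_trans with (g * gp * (k - a)); [| unfold gap; lra].
    apply Rmult_le_compat_neg_l; lra. }
  assert (Hden : g * g + gap / c <= g * (g - gp)).
  { apply (Rmult_le_reg_r c); [lra |]. field_simplify; [nra | lra]. }
  assert (Hden0 : 0 < g * g + gap / c)
    by (apply Rplus_lt_0_compat; [| apply Rdiv_lt_0_compat]; lra).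
  rewrite (bfgs_update_scalar df x k); [| lra | fold g gp; lra].
  fold g gp.
  split.
  - apply Rdiv_lt_0_compat; nra.
  - unfold Rdiv.
    assert (Hinv : / (g * (g - gp)) <= / (g * g + gap / c))
      by (apply Rinv_le_contravar; lra).
    assert (0 < k * (g * g)) by nra.
    nra.
Qed.

Lemma bfgs_update_uniform_contraction (f df : R -> R) (x c : R) :
  (forall t, derivable_pt_lim f t (df t)) -> convex f -> df x <> 0 -> 0 < c ->
  exists r, 0 < r < 1 /\
    forall k, 0 < k <= c -> f x <= f (x - k * df x) ->
      0 < bfgs_update df x k <= r * k.
Proof.
  intros Hd Hc Hg Hc0.
  destruct (small_steps_descend f df x (Hd x) Hg) as [del [Hdel Hdesc]].
  set (a := del / 2).
  set (gap := f x - f (x - a * df x)).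
  assert (Hgap : 0 < gap) by (unfold gap; specialize (Hdesc a); unfold a in *; lra).
  exists (df x * df x / (df x * df x + gap / c)). split.
  - assert (0 < df x * df x) by (apply Rsqr_pos_lt; exact Hg).
    assert (0 < gap / c) by (apply Rdiv_lt_0_compat; lra).
    split; [apply Rdiv_lt_0_compat; lra |].
    apply (Rmult_lt_reg_r (df x * df x + gap / c)); [lra |].
    unfold Rdiv at 1; rewrite Rmult_assoc, Rinv_l; lra.
  - intros k Hk Hfail.
    (* a failed step is at least [del], hence longer than the successful step [a] *)
    assert (Hdelk : del <= k)
      by (apply Rnot_lt_le; intro; specialize (Hdesc k ltac:(lra)); lra).
    apply (bfgs_update_failed_step_le f df x a k c Hd Hc Hg); unfold a; try lra.
    apply Hdesc; lra.
Qed.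

Lemma pow_lt_1_eventually_lt (r eps : R) :
  0 <= r < 1 -> 0 < eps -> exists N, r ^ N < eps.
Proof.
  intros Hr Heps.
  destruct (pow_lt_1_zero r ltac:(rewrite Rabs_pos_eq; lra) eps Heps) as [N HN].
  exists N. specialize (HN N (le_n N)).
  rewrite Rabs_pos_eq in HN by (apply pow_le; lra). exact HN.
Qed.

Lemma loop_iter_geometric_decay (f df : R -> R) (x h r : R) :
  0 < r < 1 -> 0 < h ->
  (forall k, 0 < k <= h -> f x <= f (x - k * df x) ->
     0 < bfgs_update df x k <= r * k) ->
  (forall n, f x <= f (x - loop_iter f df x h n * df x)) ->
  forall n, 0 < loop_iter f df x h n <= h * r ^ n.
Proof.
  intros Hr Hh Hcontract Hfail n.
  induction n as [| n IH]; simpl; [lra |].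
  unfold loop_step.
  destruct (Rle_dec (f x) (f (x - loop_iter f df x h n * df x))) as [Hf | Hf];
    [| contradiction (Hf (Hfail n))].
  assert (Hpow : r ^ n <= 1)
    by (rewrite <- (pow1 n); apply pow_maj_Rabs; rewrite Rabs_pos_eq; lra).
  assert (Hle : loop_iter f df x h n <= h) by nra.
  destruct (Hcontract _ (conj (proj1 IH) Hle) Hf) as [Hpos Hbound].
  split; [exact Hpos | nra].
Qed.

Theorem mainTheorem1 (f df : R -> R) (x h : R) :
  C1_with_derivative f df ->
  strictly_convex f ->
  df x <> 0 ->
  0 < h ->
  exists k : nat, f (x - loop_iter f df x h k * df x) < f x.
Proof.
  intros [Hd _] Hsc Hg Hh.
  pose proof (strictly_convex_convex f Hsc) as Hc.
  destruct (small_steps_descend f df x (Hd x) Hg) as [del [Hdel Hdesc]].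
  destruct (bfgs_update_uniform_contraction f df x h Hd Hc Hg Hh)
    as [r [Hr Hcontract]].
  destruct (pow_lt_1_eventually_lt r (del / h) ltac:(lra)
              ltac:(apply Rdiv_lt_0_compat; lra)) as [N HN].
  apply NNPP; intro Hnone.
  assert (Hfail : forall n, f x <= f (x - loop_iter f df x h n * df x))
    by (intro n; apply Rnot_lt_le; intro; apply Hnone; exists n; assumption).
  destruct (loop_iter_geometric_decay f df x h r Hr Hh Hcontract Hfail N)
    as [HN0 HN1].
  assert (HNdel : loop_iter f df x h N < del).
  { apply (Rmult_lt_compat_l h) in HN; [| lra]. field_simplify in HN; lra. }
  specialize (Hdesc _ (conj HN0 HNdel)). specialize (Hfail N). lra.
Qed.
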